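(* In the setting below, $C_2^\perp\subseteq C_1$, $\dim C_1-\dim C_2^\perp=k-m+s$, and every vector in $(C_1\setminus C_2^\perp)\cup(C_2\setminus C_1^\perp)$ has Hamming weight at least $\min(q-k,m)-s+1$. Consequently $\mathrm{CSS}(C_1,C_2)$ is a quantum CSS code over $\mathbb F_q$ with length $q-s$, dimension $k-m+s$ and distance at least $\min(q-k,m)-s+1$.
   Context: Let $q=2^l$ ($l\ge2$) and $\mathbb F_q$ the field with $q$ elements. Fix integers $k,m,s$ with $q/3\ge k\ge m\ge s>0$ and $2k\le q-m$. Fix $A\subseteq\mathbb F_q$ with $|A|=k$, $B\subseteq A$ with $|B|=s$, and let $M=\mathbb F_q\setminus B$. For $d\in\mathbb N$, $\mathbb F_q[x]_{<d}$ denotes the polynomials of degree $<d$ (including $0$). The evaluation map $\phi_M:\mathbb F_q[x]\to\mathbb F_q^M$ is $P\mapsto(P(\alpha))_{\alpha\in M}$. Let $C_1=\phi_M(\mathbb F_q[x]_{<k})$, $C_2^\perp=\phi_M(\{P\in\mathbb F_q[x]_{<m}:P(b)=0\ \forall b\in B\})$, and $C_2=\{v\in\mathbb F_q^M:\sum_{\alpha\in M}v_\alpha w_\alpha=0\ \forall w\in C_2^\perp\}$; $C_1^\perp$ is defined analogously. For linear codes $C_2^\perp\subseteq C_1$ in $\mathbb F_q^M$, $\mathrm{CSS}(C_1,C_2)$ is the span of the states $\sum_{\alpha\in C_2^\perp}|c+\alpha\rangle$, $c\in C_1$, its dimension is $\dim C_1-\dim C_2^\perp$ and its distance is the minimum Hamming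 weight of $(C_1\setminus C_2^\perp)\cup(C_2\setminus C_1^\perp)$. *)

From mathcomp Require Import all_boot all_algebra all_field.
Set Implicit Arguments. Unset Strict Implicit. Unset Printing Implicit Defensive.
Import GRing.Theory.
Local Open Scope ring_scope.

Definition Mtype (F : finFieldType) (B : {set F}) : finType :=
  {x : F | x \in ~: B}.

Definition ambient (F : finFieldType) (B : {set F}) :=
  {ffun Mtype B -> F^o}.

Definition evalM (F : finFieldType) (B : {set F}) (P : {poly F}) : ambient B :=
  [ffun a : Mtype B => P.[val a]].

(* C1 = phi_M(F[x]_{<k}) ; {poly_k F} = polynomials of size <= k, i.e. degree < k
   (including 0).  The image of a linear map, as a subspace (its span). *)
Definition C1 (F : finFieldType) (B : {set F}) (k : nat) : {vspace ambient B} :=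
  <<[seq evalM B (val p) | p : {poly_k F}]>>%VS.

Definition C2perp (F : finFieldType) (B : {set F}) (m : nat) : {vspace ambient B} :=
  <<[seq evalM B (val p) | p in [pred p : {poly_m F} | [forall b in B, (val p).[b] == 0%R]]]>>%VS.

Definition dotM (F : finFieldType) (B : {set F}) (v w : ambient B) : F :=
  \sum_(a : Mtype B) v a * w a.

Definition dual (F : finFieldType) (B : {set F}) (C : {vspace ambient B}) :
  {set ambient B} :=
  [set v : ambient B | [forall w : ambient B, (w \in C) ==> (dotM v w == 0)]].

Definition wt (F : finFieldType) (B : {set F}) (v : ambient B) : nat :=
  #|[set a : Mtype B | v a != 0]|.

Definition css_length (F : finFieldType) (B : {set F}) : nat := #|Mtype B|.
Definition css_dim (F : finFieldType) (B : {set F})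
  (D1 D2perp : {vspace ambient B}) : nat := (\dim D1 - \dim D2perp)%N.
Definition css_dist_ge (F : finFieldType) (B : {set F})
  (D1 D2perp : {vspace ambient B}) (d : nat) : Prop :=
  forall v : ambient B,
    (v \in D1 /\ v \notin D2perp) \/ (v \in dual D2perp /\ v \notin dual D1) ->
    (d <= wt v)%N.

(** The two codes are images of the evaluation map at the q - s points of M,
    restricted to polynomials of bounded degree, and evaluation is injective
    on such polynomials.  For C1 this gives dimension k, and since a nonzero
    polynomial of degree < k has fewer than k roots in M, weight
    >= q - s - k + 1.  Every polynomial of degree < m vanishing on B is a
    multiple of g = prod_(b in B) (X - b) (of degree s), so C2^perp is the
    image of g * F[x]_(<m-s), of dimension m - s.  A nonzero v in C2 of weight
    <= m - s would be detected by g times the product of (X - a) over all but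
    one point a of its support: the dot product reduces to a single nonzero
    term.  Hence the weight in C2 is > m - s. *)
From HB Require Import structures.
From mathcomp Require Import all_boot all_algebra all_field zify.
Set Implicit Arguments. Unset Strict Implicit. Unset Printing Implicit Defensive.
Import GRing.Theory.
Local Open Scope ring_scope.

Section EvaluationCodes.
Variables (F : finFieldType) (B : {set F}).

Lemma card_Mtype : #|Mtype B| = (#|F| - #|B|)%N.
Proof.
rewrite card_sig -(cardsC B) addKn.
by apply: eq_card => x; rewrite !inE.
Qed.

Lemma wt0 : wt (0 : ambient B) = 0%N.
Proof. by apply/eqP; rewrite cards_eq0; apply/eqP/setP => a; rewrite !inE ffunE eqxx. Qed.

Lemma wt_evalM (p : {poly F}) : p != 0 -> (#|Mtype B| < wt (evalM B p) + size p)%N.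
Proof.
move=> p_neq0; set Z := [set a : Mtype B | p.[val a] == 0].
have card_Z : (#|Z| < size p)%N.
  rewrite cardE -(size_map val); apply: max_poly_roots => //.
    by apply/allP => x /mapP [a]; rewrite mem_enum inE => Za ->.
  by rewrite map_inj_uniq ?enum_uniq //; exact: val_inj.
have supp_evalM : [set a | evalM B p a != 0] = ~: Z.
  by apply/setP => a; rewrite !inE ffunE.
by rewrite /wt supp_evalM -(cardsC Z); lia.
Qed.

Definition mul_evalM (c : {poly F}) (n : nat) (u : {poly_n F}) : ambient B :=
  evalM B (c * val u).

Fact mul_evalM_is_linear c n : linear (@mul_evalM c n).
Proof.
move=> a u v; apply/ffunP => x; rewrite !ffunE /=.
by rewrite mulrDr hornerD -scalerAr hornerZ.
Qed.

HB.instance Definition _ c n :=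
  GRing.isLinear.Build _ _ _ _ (@mul_evalM c n) (@mul_evalM_is_linear c n).

Lemma lfun_mul_evalM c n (u : {poly_n F}) :
  linfun (@mul_evalM c n) u = evalM B (c * val u).
Proof. by rewrite lfunE. Qed.

Lemma mul_evalM_inj (c : {poly F}) n :
  c != 0 -> (size c + n <= #|Mtype B| + 1)%N -> injective (@mul_evalM c n).
Proof.
move=> c_neq0 size_cn u v /eqP; rewrite -subr_eq0 -raddfB => /eqP evalM_eq0.
apply/eqP; rewrite -subr_eq0; apply: contraT => uv_neq0.
have cuv_neq0 : c * val (u - v) != 0 by rewrite mulf_neq0.
have := wt_evalM cuv_neq0; rewrite [evalM _ _]evalM_eq0 wt0 add0n.
have := size_mul_leq c (val (u - v)); have : (size (val (u - v)%R) <= n)%N := size_npoly _.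
have : (0 < size c)%N by rewrite size_poly_gt0.
lia.
Qed.

Lemma dim_mul_evalM (c : {poly F}) n :
  c != 0 -> (size c + n <= #|Mtype B| + 1)%N ->
  \dim (limg (linfun (@mul_evalM c n))) = n.
Proof.
move=> c_neq0 size_cn; rewrite limg_dim_eq ?dim_polyn //.
have /lker0P/eqP-> : injective (linfun (@mul_evalM c n)).
  by move=> u v; rewrite !lfun_mul_evalM => /(mul_evalM_inj c_neq0 size_cn).
by rewrite capv0.
Qed.

Lemma C1E k : C1 B k = limg (linfun (@mul_evalM 1 k)).
Proof.
apply/eqP; rewrite eqEsubv; apply/andP; split.
  apply/span_subvP => _ /mapP [p _ ->].
  have -> : evalM B (val p) = linfun (@mul_evalM 1 k) p by rewrite lfun_mul_evalM mul1r.
  exact: memv_img (memvf p).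
apply/subvP => _ /memv_imgP [u _ ->]; rewrite lfun_mul_evalM mul1r.
by apply: memv_span; apply: map_f; rewrite mem_enum.
Qed.

Lemma C2perp_sub_C1 m k : (m <= k)%N -> (C2perp B m <= C1 B k)%VS.
Proof.
move=> le_mk; apply/span_subvP => _ /imageP [p _ ->].
have size_p : (size (val p) <= k)%N := leq_trans (size_npoly p) le_mk.
have -> : val p = val (NPoly size_p) by [].
by apply: memv_span; apply: map_f; rewrite mem_enum.
Qed.

Lemma wt_C1 k (v : ambient B) : v \in C1 B k -> v != 0 -> (#|Mtype B| < wt v + k)%N.
Proof.
rewrite C1E => /memv_imgP [u _ ->]; rewrite lfun_mul_evalM mul1r.
have : (size (val u) <= k)%N := size_npoly u.
move: (val u) => p size_p evalM_neq0.
have p_neq0 : p != 0.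
  by apply: contraNneq evalM_neq0 => ->; apply/eqP/ffunP => a; rewrite !ffunE horner0.
by move/leq_trans: (wt_evalM p_neq0); apply; rewrite leq_add2l.
Qed.

Definition ann_poly : {poly F} := \prod_(b <- enum B) ('X - b%:P).

Lemma size_ann_poly : size ann_poly = (#|B|).+1.
Proof. by rewrite size_prod_XsubC cardE. Qed.

Lemma ann_poly_neq0 : ann_poly != 0.
Proof. by rewrite -size_poly_eq0 size_ann_poly. Qed.

Lemma root_ann_poly x : root ann_poly x = (x \in B).
Proof. by rewrite root_prod_XsubC mem_enum. Qed.

Lemma ann_poly_mul_in_C2perp m (u : {poly F}) :
  (#|B| <= m)%N -> (size u <= m - #|B|)%N -> evalM B (ann_poly * u) \in C2perp B m.
Proof.
move=> le_Bm size_u.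
have size_au : (size (ann_poly * u)%R <= m)%N.
  by have := size_mul_leq ann_poly u; rewrite size_ann_poly; lia.
have -> : evalM B (ann_poly * u) = evalM B (val (NPoly size_au)) by [].
apply/memv_span/image_f; rewrite inE; apply/forallP => b; apply/implyP => Bb.
by rewrite hornerM (rootP (_ : root ann_poly b)) ?mul0r ?root_ann_poly.
Qed.

Lemma C2perpE m : (#|B| <= m)%N -> C2perp B m = limg (linfun (@mul_evalM ann_poly (m - #|B|))).
Proof.
move=> le_Bm; apply/eqP; rewrite eqEsubv; apply/andP; split.
  apply/span_subvP => _ /imageP [p /[!inE] /forallP p_vanish ->].
  have ann_dvd_p : ann_poly %| val p.
    apply: uniq_roots_dvdp; last by rewrite uniq_rootsE enum_uniq.
    by apply/allP => b; rewrite mem_enum => Bb; have /implyP/(_ Bb) := p_vanish b.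
  have size_quo : (size (val p %/ ann_poly)%R <= m - #|B|)%N.
    rewrite size_divp ?ann_poly_neq0 // size_ann_poly.
    exact: leq_sub2r (size_npoly p).
  have -> : evalM B (val p) = linfun (@mul_evalM ann_poly (m - #|B|)) (NPoly size_quo).
    by rewrite lfun_mul_evalM mulrC divpK.
  exact: memv_img (memvf _).
apply/subvP => _ /memv_imgP [u _ ->]; rewrite lfun_mul_evalM.
exact/(ann_poly_mul_in_C2perp le_Bm)/size_npoly.
Qed.

Lemma mem0_dual (C : {vspace ambient B}) : 0 \in dual C.
Proof.
rewrite inE; apply/forallP => w; apply/implyP => _.
by rewrite /dotM big1 // => a _; rewrite ffunE mul0r.
Qed.

Lemma wt_dual_C2perp m (v : ambient B) :
  (#|B| <= m)%N -> v \in dual (C2perp B m) -> v != 0 -> (m - #|B| < wt v)%N.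
Proof.
move=> le_Bm v_dual v_neq0; rewrite ltnNge; apply/negP => wt_v.
have [a0 va0_neq0 | v_eq0] := pickP (fun a => v a != 0); last first.
  by move/eqP: v_neq0; apply; apply/ffunP => a; rewrite ffunE; apply/eqP/negbFE/v_eq0.
set S := [set a | v a != 0]; have S_a0 : a0 \in S by rewrite inE.
set Q := \prod_(x <- map val (enum (S :\ a0))) ('X - x%:P).
have root_Q a : root Q (val a) = (a \in S :\ a0).
  by rewrite root_prod_XsubC mem_map ?mem_enum //; exact: val_inj.
have size_Q : (size Q <= m - #|B|)%N.
  by rewrite size_prod_XsubC size_map -cardE; move: wt_v; rewrite /wt -/S (cardsD1 a0 S) S_a0.
move: v_dual; rewrite inE => /forallP /(_ (evalM B (ann_poly * Q))) /implyP.
move=> /(_ (ann_poly_mul_in_C2perp le_Bm size_Q)) /eqP.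
rewrite /dotM (bigD1 a0) //= big1 ?addr0 => [|a a_neq0].
  rewrite ffunE hornerM => /eqP; rewrite !mulf_eq0 (negPf va0_neq0) /=.
  rewrite -!/(root _ _) root_ann_poly root_Q !inE eqxx /=.
  by rewrite orbF => a0_B; have := valP a0; rewrite inE a0_B.
have [-> | va_neq0] := eqVneq (v a) 0; first by rewrite mul0r.
rewrite ffunE hornerM (rootP (_ : root Q (val a))) ?mulr0 //.
by rewrite root_Q !inE a_neq0 va_neq0.
Qed.

End EvaluationCodes.

Theorem proposition5p6 (F : finFieldType) (l : nat) (k m s : nat)
  (A B : {set F}) :
  (2 <= l)%N -> #|F| = (2 ^ l)%N ->
  (3 * k <= 2 ^ l)%N -> (m <= k)%N -> (s <= m)%N -> (0 < s)%N ->
  (2 * k <= 2 ^ l - m)%N ->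
  #|A| = k -> B \subset A -> #|B| = s ->
  [/\ (C2perp B m <= C1 B k)%VS,
      (\dim (C1 B k) - \dim (C2perp B m))%N = (k - m + s)%N &
      forall v : ambient B,
        (v \in C1 B k /\ v \notin C2perp B m) \/
        (v \in dual (C2perp B m) /\ v \notin dual (C1 B k)) ->
        (minn (2 ^ l - k) m - s + 1 <= wt v)%N] /\
  [/\ css_length B = (2 ^ l - s)%N,
      css_dim (C1 B k) (C2perp B m) = (k - m + s)%N &
      css_dist_ge (C1 B k) (C2perp B m) (minn (2 ^ l - k) m - s + 1)].
Proof.
move=> _ card_F _ le_mk le_sm _ le_2k _ _ card_B.
have card_M : #|Mtype B| = (2 ^ l - s)%N by rewrite card_Mtype card_F card_B.
have le_Bm : (#|B| <= m)%N by rewrite card_B.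
have dim_C1 : \dim (C1 B k) = k.
  by rewrite C1E dim_mul_evalM ?oner_eq0 // size_poly1 card_M; lia.
have dim_C2perp : \dim (C2perp B m) = (m - s)%N.
  by rewrite C2perpE // dim_mul_evalM ?ann_poly_neq0 ?card_B // size_ann_poly card_M card_B; lia.
have dist : css_dist_ge (C1 B k) (C2perp B m) (minn (2 ^ l - k) m - s + 1).
  move=> v [[C1_v C2perp_v] | [C2_v C1perp_v]].
    have v_neq0 : v != 0 by apply: contraNneq C2perp_v => ->; exact: mem0v.
    by have := wt_C1 C1_v v_neq0; rewrite card_M; lia.
  have v_neq0 : v != 0 by apply: contraNneq C1perp_v => ->; exact: mem0_dual.
  by have := wt_dual_C2perp le_Bm C2_v v_neq0; rewrite card_B; lia.
have dim_css : (\dim (C1 B k) - \dim (C2perp B m))%N = (k - m + s)%N.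
  by rewrite dim_C1 dim_C2perp; lia.
by split; split; rewrite ?C2perp_sub_C1.
Qed.
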